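(* Let $\pi:(X,T)\to(Z,R)$ be a factor map between dynamical systems. (1) If $\pi$ is almost one-to-one and $(Z,R)$ is transitively sensitive (with some sensitive constant $\delta>0$), then $(X,T)$ is transitively sensitive. (2) If there exists $z\in Z$ with $\pi^{-1}(z)$ a singleton and $(X,T)$ is transitively sensitive, then $(Z,R)$ is sensitive; in particular $\mathrm{Eq}(Z,R)=\varnothing$.
   Context: A dynamical system $(X,T)$: $X$ is a compact metric space (metric $d$) with more than one point and without isolated points, $T:X\to X$ a continuous surjection. A factor map $\pi:(X,T)\to(Z,R)$ is a continuous surjection $\pi:X\to Z$ with $\pi\circ T=R\circ\pi$. $\pi$ is almost one-to-one if the set of $x\in X$ with $\pi^{-1}(\pi(x))=\{x\}$ is dense in $X$. ''Opene'' means open and nonempty. $S_T(U,\delta)=\{n\in\mathbb{Z}_+:\exists x_1,x_2\in U,\ d(T^nx_1,T^nx_2)>\delta\}$, $N_T(U,V)=\{n\in\mathbb{Z}_+:U\cap T^{-n}V\neq\varnothing\}$. $(X,T)$ is transitively sensitive (with sensitive constant $\delta$) if $S_T(W,\delta)\cap N_T(U,V)\neq\varnothing$ for all opene $U,V,W$. $(Z,R)$ is sensitive if there is $\delta>0$ such that for every $z\in Z$ and neighbourhood $U$ of $z$ there exist $y\in U$, $n\in\mathbb{N}$ with $\rho(R^nz,R^ny)>\delta$ ($\rho$ the metric of $Z$). $\mathrm{Eq}(Z,R)$ is the set of equicontinuity points: $z$ such that for every $\varepsilon>0$ there is $\eta>0$ with $\rho(z,z')<\eta\Rightarrow\rho(R^nz,R^nz')<\varepsilon$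 for all $n\in\mathbb{Z}_+$. *)

From HB Require Import structures.
From mathcomp Require Import all_boot all_order all_algebra.
From mathcomp Require Import all_classical all_reals all_analysis.
Set Implicit Arguments. Unset Strict Implicit. Unset Printing Implicit Defensive.
Import Order.TTheory GRing.Theory Num.Theory.
Local Open Scope classical_set_scope.
Local Open Scope ring_scope.

Definition dynamical_system {R : realType} (X : metricType R) (T : X -> X) : Prop :=
  [/\ compact [set: X],
      (exists x y : X, x <> y),
      (forall x : X, ~ open [set x]),
      continuous T
    & (forall y : X, exists x : X, T x = y)].

Definition factor_map {R : realType} (X Z : metricType R) (T : X -> X) (S : Z -> Z)
  (pi : X -> Z) : Prop :=
  [/\ continuous pi, (forall z : Z, exists x : X, pi x = z)
    & (forall x : X, pi (T x) = S (pi x))].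

Definition almost_one_to_one {R : realType} (X Z : metricType R) (pi : X -> Z) : Prop :=
  dense [set x : X | pi @^-1` [set pi x] = [set x]].

Definition opene {R : realType} (X : metricType R) (U : set X) : Prop :=
  open U /\ U !=set0.

(* S_T(U, delta), n ranging over Z_+ = nat (including 0) *)
Definition S_T {R : realType} (X : metricType R) (T : X -> X) (U : set X) (delta : R)
  : set nat :=
  [set n | exists x1 x2 : X, [/\ U x1, U x2 & mdist (iter n T x1) (iter n T x2) > delta]].

Definition N_T {R : realType} (X : metricType R) (T : X -> X) (U V : set X) : set nat :=
  [set n | (U `&` (iter n T) @^-1` V) !=set0].

Definition transitively_sensitive_with {R : realType} (X : metricType R) (T : X -> X)
  (delta : R) : Prop :=
  0 < delta /\
  forall U V W : set X, opene U -> opene V -> opene W ->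
    (S_T T W delta `&` N_T T U V) !=set0.

Definition transitively_sensitive {R : realType} (X : metricType R) (T : X -> X) : Prop :=
  exists delta : R, transitively_sensitive_with T delta.

Definition sensitive {R : realType} (Z : metricType R) (S : Z -> Z) : Prop :=
  exists delta : R, 0 < delta /\
    forall (z : Z) (U : set Z), nbhs z U ->
      exists (y : Z) (n : nat), [/\ U y, (0 < n)%N & mdist (iter n S z) (iter n S y) > delta].

Definition Eq_points {R : realType} (Z : metricType R) (S : Z -> Z) : set Z :=
  [set z | forall eps : R, 0 < eps -> exists2 eta : R, 0 < eta &
     forall z' : Z, mdist z z' < eta -> forall n : nat, mdist (iter n S z) (iter n S z') < eps].

From HB Require Import structures.
From mathcomp Require Import all_boot all_order all_algebra.
From mathcomp Require Import all_classical all_reals all_analysis.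
From mathcomp Require Import lra.
Import Order.TTheory GRing.Theory Num.Theory metricType_numDomainType.
Local Open Scope classical_set_scope.
Local Open Scope ring_scope.
Set Implicit Arguments.
Unset Strict Implicit.

(* Since X is compact, pi is a closed map: every neighbourhood of a fibre
   pi^-1(z) contains the pullback of a neighbourhood of z. Hence, when singleton
   fibres are dense, every opene set of X contains the pullback of an opene set of
   Z, and transitive sensitivity of Z lifts to X, the sensitive constant coming
   from the uniform continuity of pi. Conversely, if pi^-1(z0) = {x0} then pi^-1 is
   continuous at z0: of two points of X whose n-th iterates are delta apart, one
   does not land near x0, so its image does not land near z0, while transitivity
   provides a third point of the same small open set whose image does land near z0
   at time n; one of these two images is far from the orbit of any given z. *)

Lemma iter_semiconj (X Z : Type) (T : X -> X) (S : Z -> Z) (pi : X -> Z) :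
  (forall x, pi (T x) = S (pi x)) -> forall n x, pi (iter n T x) = iter n S (pi x).
Proof. by move=> piT; elim=> [|n IHn] x //=; rewrite piT IHn. Qed.

Section MetricFacts.
Variables (R : realType) (X Z : metricType R).

Lemma mdist_split_gt (w u v : Z) (c : R) :
  2 * c < mdist u v -> c < mdist w u \/ c < mdist w v.
Proof.
move=> cuv; have [|wu] := ltP c (mdist w u); [by left | right].
rewrite ltNge; apply/negP => wv.
by have := metric_triangle u w v; rewrite (metric_sym u w); lra.
Qed.

Lemma compact_unif_continuous (f : X -> Z) (e : R) :
  compact [set: X] -> continuous f -> 0 < e ->
  exists2 d : R, 0 < d & forall a b, mdist a b < d -> mdist (f a) (f b) < e.
Proof.
move=> cptX fc e0.
have near_cover : \forall d \near (0 : R)^'+, [set: X] `<=`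
    [set a | forall b, mdist a b < d -> mdist (f a) (f b) < e].
  move: cptX => /compact_near_coveringP; apply => x _.
  have := cvgr_dist_lt (fc x) (divr_gt0 e0 (ltr0n _ 2)).
  move=> /(_ _)/nbhs_mdistP[r /= r0 fr].
  have r20 : 0 < r / 2 by rewrite divr_gt0.
  exists (ball x (r / 2), [set i | i < r / 2]).
    by split; [exact: nbhsx_ballx | exact: nbhs_right_lt].
  move=> [a i] [/= xa ir] b /= ab; rewrite -ball_mdistE /= in xa.
  have /fr /= fxa : mdist x a < r by lra.
  have /fr /= fxb : mdist x b < r by have := metric_triangle x a b; lra.
  have := metric_triangle (f a) (f x) (f b).
  rewrite (metric_sym (f a) (f x)); lra.
have [d [d0 /= fd]] := filter_ex (filterI (nbhs_right_gt 0) near_cover).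
by exists d => // a b; apply: fd.
Qed.

Lemma compact_fibre_open_nbhs (f : X -> Z) (z : Z) (W : set X) :
  compact [set: X] -> continuous f -> open W -> f @^-1` [set z] `<=` W ->
  exists O : set Z, [/\ open O, O z & f @^-1` O `<=` W].
Proof.
move=> cptX fc oW fibW; exists (~` (f @` ~` W)); split.
- rewrite openC; apply: compact_closed; first exact: metric_hausdorff.
  apply: continuous_compact; first exact: continuous_subspaceT.
  by apply: subclosed_compact cptX (subsetT _); rewrite closedC.
- by move=> [x nWx fxz]; apply: nWx; apply: fibW.
- by move=> x /= nfx; apply: contrapT => nWx; apply: nfx; exists x.
Qed.

Lemma singleton_fibre_nbhs (f : X -> Z) (z0 : Z) (x0 : X) (e : R) :
  compact [set: X] -> continuous f -> f @^-1` [set z0] = [set x0] -> 0 < e ->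
  exists2 r : R, 0 < r & forall x, mdist z0 (f x) < r -> mdist x0 x < e.
Proof.
move=> cptX fc fib e0.
have [||O [oO Oz0 fOx0]] := @compact_fibre_open_nbhs f z0 (ball x0 e)° cptX fc.
- exact: open_interior.
- by rewrite fib => _ ->; apply: nbhsx_ballx.
have /nbhs_mdistP[r /= r0 rO] : nbhs z0 O by apply: open_nbhs_nbhs.
exists r => // x /rO /fOx0 /interior_subset.
by rewrite -ball_mdistE.
Qed.

End MetricFacts.

Lemma sensitive_Eq_points0 (R : realType) (Z : metricType R) (S : Z -> Z) :
  sensitive S -> Eq_points S = set0.
Proof.
move=> [d [d0 sensS]]; apply/seteqP; split => [z /= eqz|//].
have [eta eta0 eqS] := eqz d d0.
have /sensS[y [n [zy _ far]]] : nbhs z [set y | mdist z y < eta].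
  by apply/nbhs_mdistP; exists eta.
by have := eqS y zy n; lra.
Qed.

Section FactorMap.
Variables (R : realType) (X Z : metricType R) (T : X -> X) (S : Z -> Z) (pi : X -> Z).
Hypotheses (cptX : compact [set: X]) (pi_cont : continuous pi)
  (pi_surj : forall z, exists x, pi x = z) (piT : forall x, pi (T x) = S (pi x)).

Let piTn := iter_semiconj piT.

Lemma opene_pullback_inside (A : set X) :
  almost_one_to_one pi -> opene A -> exists O, opene O /\ pi @^-1` O `<=` A.
Proof.
move=> a11 [oA A0].
have [u [Au fibu]] := a11 A A0 oA; rewrite /= in fibu.
have [|O [oO Opu piOA]] := compact_fibre_open_nbhs (z := pi u) cptX pi_cont oA.
  by rewrite fibu => _ ->.
by exists O; split => //; split => //; exists (pi u).
Qed.

Lemma opene_interior_preimage_mball (z : Z) (e : R) :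
  0 < e -> opene (pi @^-1` [set y | mdist z y < e])°.
Proof.
move=> e0; split; first exact: open_interior.
have [x <-] := pi_surj z; exists x; apply: pi_cont.
by apply/nbhs_mdistP; exists e.
Qed.

Lemma transitively_sensitive_of_almost_one_to_one (del : R) :
  almost_one_to_one pi -> transitively_sensitive_with S del -> transitively_sensitive T.
Proof.
move=> a11 [del0 tsS].
have [d d0 pi_unif] := compact_unif_continuous cptX pi_cont del0.
exists (d / 2); split => [|U V W oU oV oW]; first by rewrite divr_gt0.
have [OU [oOU OU_U]] := opene_pullback_inside a11 oU.
have [OV [oOV OV_V]] := opene_pullback_inside a11 oV.
have [OW [oOW OW_W]] := opene_pullback_inside a11 oW.
have [n [[z1 [z2 [Wz1 Wz2 far]]] [u [Uu Vnu]]]] := tsS _ _ _ oOU oOV oOW.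
have [x1 px1] := pi_surj z1; have [x2 px2] := pi_surj z2; have [x px] := pi_surj u.
exists n; split.
- exists x1, x2; split.
  + by apply: OW_W; rewrite /= px1.
  + by apply: OW_W; rewrite /= px2.
  + rewrite ltNge; apply/negP => close.
    have /pi_unif : mdist (iter n T x1) (iter n T x2) < d by lra.
    by rewrite !piTn px1 px2; lra.
- by exists x; split; [apply: OU_U | apply: OV_V]; rewrite /= ?piTn px.
Qed.

Lemma sensitive_of_singleton_fibre (z0 : Z) (x0 : X) (del : R) :
  pi @^-1` [set z0] = [set x0] -> transitively_sensitive_with T del -> sensitive S.
Proof.
move=> fib [del0 tsT].
have [r r0 near_x0] := singleton_fibre_nbhs cptX pi_cont fib (divr_gt0 del0 (ltr0n _ 2)).
exists (r / 4); split => [|z U /nbhs_mdistP[rho /= rho0 rhoU]]; first by rewrite divr_gt0.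
pose e := Num.min rho (r / 4).
have e0 : 0 < e by rewrite lt_min rho0 divr_gt0.
have e_rho : e <= rho by rewrite /e ge_min lexx.
have e_r : e <= r / 4 by rewrite /e ge_min lexx orbT.
have [n [[x1 [x2 [Wx1 Wx2 far12]]] [x [Wx Vnx]]]] :=
  tsT _ _ _ (opene_interior_preimage_mball z e0)
    (opene_interior_preimage_mball z0 (divr_gt0 r0 (ltr0n _ 2)))
    (opene_interior_preimage_mball z e0).
move: Wx Vnx => /interior_subset /= zx /interior_subset /=; rewrite piTn => z0x.
have [a [/interior_subset /= za far_a]] :
    exists a, (pi @^-1` [set y | mdist z y < e])° a /\ del / 2 < mdist x0 (iter n T a).
  have /(mdist_split_gt x0)[far|far] :
      2 * (del / 2) < mdist (iter n T x1) (iter n T x2) by lra.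
  - by exists x1.
  - by exists x2.
have far_images : r / 2 < mdist (iter n S (pi x)) (iter n S (pi a)).
  have : r <= mdist z0 (iter n S (pi a)).
    by rewrite -piTn leNgt; apply/negP => /near_x0; lra.
  by have := metric_triangle z0 (iter n S (pi x)) (iter n S (pi a)); lra.
have n_gt0 : (0 < n)%N.
  case: n far_images {far12 z0x far_a} => //= far_xa.
  by have := metric_triangle (pi x) z (pi a); rewrite (metric_sym (pi x) z); lra.
have /(mdist_split_gt (iter n S z))[far|far] :
    2 * (r / 4) < mdist (iter n S (pi x)) (iter n S (pi a)) by lra.
- by exists (pi x), n; split => //; apply: rhoU => /=; lra.
- by exists (pi a), n; split => //; apply: rhoU => /=; lra.
Qed.

End FactorMap.

Theorem lemma4p4 (R : realType) (X Z : metricType R) (T : X -> X) (S : Z -> Z)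
  (pi : X -> Z) :
  dynamical_system T -> dynamical_system S -> factor_map T S pi ->
  ((almost_one_to_one pi ->
      (exists delta : R, transitively_sensitive_with S delta) ->
      transitively_sensitive T)
   /\
   ((exists (z : Z) (x : X), pi @^-1` [set z] = [set x]) ->
      transitively_sensitive T ->
      sensitive S /\ Eq_points S = set0)).
Proof.
move=> [cptX _ _ _ _] _ [pi_cont pi_surj piT]; split.
  move=> a11 [del tsS].
  exact: transitively_sensitive_of_almost_one_to_one a11 tsS.
move=> [z0 [x0 fib]] [del tsT].
have sensS := sensitive_of_singleton_fibre cptX pi_cont pi_surj piT fib tsT.
by split; last exact: sensitive_Eq_points0.
Qed.
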